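(* Let $n\ge3$, $k\ge0$ with $k<n\le 2k$. Let $S\subseteq\mathrm{Inc}(A,B)$ be a maximal independent set of $G_n^k$ which is not reversible and which contains a strict alternating cycle of size $3$ satisfying the Disjoint Property. Then there exist an integer $t\ge1$ and an alternating cycle $C_0$ of size $2t+1$ in $\mathrm{Inc}(A,B)$ satisfying the Matching Conditions such that $S=D(C_0)$.
   Context: For integers $n\ge3$, $k\ge0$, the crown $S_n^k$ is the poset with ground set $A\cup B$, $A=\{a_1,\dots,a_{n+k}\}$, $B=\{b_1,\dots,b_{n+k}\}$, indices cyclic modulo $n+k$; elements of $A$ are pairwise incomparable, as are elements of $B$, and $a_i$ is incomparable to $b_j$ when $j\in\{i,\dots,i+k\}$ (mod $n+k$), while $a_i<b_j$ otherwise. $\mathrm{Inc}(A,B)$ is the set of pairs $(a,b)\in A\times B$ with $a$ incomparable to $b$; $G_n^k$ has vertex set $\mathrm{Inc}(A,B)$ with $(a,b)$ adjacent to $(x,y)$ iff $a<y$ and $x<b$. A set $R\subseteq\mathrm{Inc}(A,B)$ is reversible if some linear extension $L$ of $S_n^k$ has $b<a$ in $L$ for all $(a,b)\in R$. An indexed set $\{(x_\alpha,y_\alpha):\alpha\in[m]\}\subseteq\mathrm{Inc}(A,B)$ is an alternating cycle of size $m$ if $x_\alpha\le y_{\alpha-1}$ for all $\alpha$ (indices cyclic mod $m$); it is strict if $x_\alpha\le y_\beta$ holds iff $\beta=\alpha-1$. Circle conventions: points $u_1,\dots,u_{n+k}$ lie clockwise on a circle and both $a_i$ and $b_i$ are placed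 at $u_i$. For elements $p_1,\dots,p_\ell$, a chain $p_1\,R_1\,p_2\,R_2\cdots p_\ell$ with each $R_j\in\{\prec,\preceq\}$ means that travelling clockwise from the position of $p_1$ until first reaching the position of $p_\ell$ one meets the positions of $p_2,\dots,p_{\ell-1}$ in this order, where $\prec$ requires the two consecutive positions to be distinct and $\preceq$ allows them to coincide. The size of a pair $(v,v')$ with $v$ at $u_i$, $v'$ at $u_j$ is $j-i+1$ modulo $n+k$, taken in $\{1,\dots,n+k\}$. A strict alternating cycle $\{(x_\alpha,y_\alpha):\alpha\in[3]\}$ satisfies the Disjoint Property if $x_1\preceq y_1\prec x_2\preceq y_2\prec x_3\preceq y_3$. An alternating cycle $C_0=\{(x_\alpha,y_\alpha):\alpha\in[2t+1]\}$ (indices mod $2t+1$) satisfies the Matching Conditions if for every $\alpha$: (i) $x_\alpha\preceq y_\alpha\prec x_{\alpha+1}\preceq y_{\alpha+1}$, and (ii) the size of $(x_\alpha,y_{\alpha+t})$ is $k+1$. $D(C_0)$ is the set of all $(x,y)\in\mathrm{Inc}(A,B)$ for which there is $\alpha$ with $x_\alpha\preceq x\preceq y\preceq y_\alpha$. *)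

(* Crown posets S_n^k, with N = n + k. *)
From mathcomp Require Import all_boot.
Set Implicit Arguments. Unset Strict Implicit. Unset Printing Implicit Defensive.

(* clockwise offset from position i to position j on the circle u_0..u_{N-1} *)
Definition off (N i j : nat) : nat := (j + N - i) %% N.

(* a_i || b_j  iff  j in {i,...,i+k} (mod N) *)
Definition incb (N k i j : nat) : bool := off N i j <= k.
(* a_i < b_j otherwise *)
Definition ltAB (N k i j : nat) : bool := k < off N i j.

(* ground set A ∪ B : inl i = a_i, inr j = b_j *)
Definition elem (N : nat) := ('I_N + 'I_N)%type.

Definition le_crown (N k : nat) (u v : elem N) : bool :=
  (u == v) || match u, v with inl i, inr j => ltAB N k i j | _, _ => false end.

(* vertices of G_n^k : pairs (i,j) standing for (a_i, b_j) in Inc(A,B) *)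
Definition vtx (N : nat) := ('I_N * 'I_N)%type.
Definition Inc (N k : nat) : {set vtx N} := [set p : vtx N | incb N k p.1 p.2].

Definition adjG (N k : nat) (p q : vtx N) : bool :=
  le_crown k (inl p.1) (inr q.2) && le_crown k (inl q.1) (inr p.2).

Definition independent (N k : nat) (S : {set vtx N}) : Prop :=
  S \subset Inc N k /\ forall p q, p \in S -> q \in S -> ~~ adjG k p q.

Definition maximal_independent (N k : nat) (S : {set vtx N}) : Prop :=
  independent k S /\
  forall S' : {set vtx N}, S \subset S' -> independent k S' -> S' = S.

(* a linear extension, given by an injective order-preserving ranking *)
Definition linear_extension (N k : nat) (L : elem N -> nat) : Prop :=
  injective L /\ forall u v, le_crown k u v -> L u <= L v.

Definition reversible (N k : nat) (R : {set vtx N}) : Prop :=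
  exists L : elem N -> nat, linear_extension k L /\
    forall p, p \in R -> L (inr p.2) < L (inl p.1).

(* indexed families (x_a, y_a), a < m, indices taken mod m *)
Definition cyc (N m : nat) (c : nat -> vtx N) (a : nat) : vtx N := c (a %% m).
Definition xx (N m : nat) (c : nat -> vtx N) (a : nat) : 'I_N := (cyc m c a).1.
Definition yy (N m : nat) (c : nat -> vtx N) (a : nat) : 'I_N := (cyc m c a).2.

Definition alt_cycle (N k m : nat) (c : nat -> vtx N) : Prop :=
  0 < m /\
  (forall a b, a < m -> b < m -> c a = c b -> a = b) /\
  (forall a, a < m -> c a \in Inc N k) /\
  (forall a, a < m -> le_crown k (inl (xx m c a)) (inr (yy m c (a + m - 1)))).

Definition strict_alt_cycle (N k m : nat) (c : nat -> vtx N) : Prop :=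
  alt_cycle k m c /\
  forall a b, a < m -> b < m ->
    (le_crown k (inl (xx m c a)) (inr (yy m c b)) <-> b = (a + m - 1) %% m).

(* circle chains p1 R1 p2 R2 ... pl : a step (true, q) is "≺ q",
   (false, q) is "⪯ q"; positions are compared by their clockwise offset
   from p1, taken in [0, N). *)
Fixpoint chain_aux (N p1 prev : nat) (st : seq (bool * nat)) : bool :=
  match st with
  | [::] => true
  | (s, q) :: st' =>
      (if s then off N p1 prev < off N p1 q else off N p1 prev <= off N p1 q)
      && chain_aux N p1 q st'
  end.
Definition chain (N p1 : nat) (st : seq (bool * nat)) : bool :=
  chain_aux N p1 p1 st.

(* size of a pair (v at u_i, v' at u_j): j - i + 1 mod N, in {1..N} *)
Definition pair_size (N i j : nat) : nat := (off N i j).+1.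

Definition disjoint_property (N : nat) (c : nat -> vtx N) : bool :=
  chain N (xx 3 c 0)
    [:: (false, nat_of_ord (yy 3 c 0)); (true, nat_of_ord (xx 3 c 1));
        (false, nat_of_ord (yy 3 c 1)); (true, nat_of_ord (xx 3 c 2));
        (false, nat_of_ord (yy 3 c 2))].

Definition matching_conditions (N k t : nat) (c : nat -> vtx N) : Prop :=
  let m := (2 * t).+1 in
  forall a, a < m ->
    chain N (xx m c a)
      [:: (false, nat_of_ord (yy m c a)); (true, nat_of_ord (xx m c a.+1));
          (false, nat_of_ord (yy m c a.+1))]
    /\ pair_size N (xx m c a) (yy m c (a + t)) = k.+1.

Definition Dset (N k m : nat) (c : nat -> vtx N) : {set vtx N} :=
  [set p in Inc N k | [exists a : 'I_m,
     chain N (xx m c a) [:: (false, nat_of_ord p.1); (false, nat_of_ord p.2);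
                            (false, nat_of_ord (yy m c a))]]].

(* Read a vertex (a_i, b_j) of G_n^k as the clockwise arc from u_i to u_j: the vertices are
   the arcs of length at most k on a circle of N = n + k > 2k points, and two arcs are
   non-adjacent when the end of one lies within k steps after the start of the other.
   Maximality of S means that S absorbs every short arc non-adjacent to all its elements,
   e.g. the union of two overlapping arcs of S when it is still short. The strict 3-cycle
   with the Disjoint Property forbids two overlapping arcs of S with a long union, so the
   maximal arcs of S are pairwise disjoint, and all their sub-arcs lie in S. List the
   maximal arcs clockwise. If no maximal arc ended exactly k after the start of a given
   one, that one could be extended backwards inside S; so some arc a fixed number d of
   places ahead in the list does, and non-adjacency of the maximal arcs forces the list to
   have length 2d + 1. The list itself is then C_0, with t = d. *)

From mathcomp Require Import all_boot zify.
Set Implicit Arguments. Unset Strict Implicit. Unset Printing Implicit Defensive.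

(** * Offsets on the circle *)

Section CircleOffsets.
Variable N : nat.
Implicit Types (b i j x y z : 'I_N).

Lemma offE i j : off N i j = if i <= j then j - i else j + N - i.
Proof.
have iN := ltn_ord i; have jN := ltn_ord j.
rewrite /off; case: leqP => h.
  have -> : j + N - i = (j - i) + N by lia.
  by rewrite modnDr modn_small //; lia.
by rewrite modn_small //; lia.
Qed.

Lemma off_ltN i j : off N i j < N.
Proof. by rewrite /off ltn_pmod //; case: N i => [[]|]. Qed.

Lemma offnn i : off N i i = 0.
Proof. by rewrite offE leqnn subnn. Qed.

Lemma off_rebase b i j :
  (off N b i <= off N b j /\ off N i j = off N b j - off N b i) \/
  (off N b j < off N b i /\ off N i j = off N b j + N - off N b i).
Proof.
have bN := ltn_ord b; have iN := ltn_ord i; have jN := ltn_ord j.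
rewrite !offE; case: (leqP i j); case: (leqP b i); case: (leqP b j); lia.
Qed.

Lemma off_rebase_le b i j :
  off N b i <= off N b j -> off N i j = off N b j - off N b i.
Proof. by case: (off_rebase b i j) => -[h e] //; lia. Qed.

Lemma off_rebase_gt b i j :
  off N b j < off N b i -> off N i j = off N b j + N - off N b i.
Proof. by case: (off_rebase b i j) => -[h e] //; lia. Qed.

Lemma offD b x y : off N b x + off N x y < N -> off N b y = off N b x + off N x y.
Proof. by case: (off_rebase b x y) => -[h ->]; lia. Qed.

Lemma off_inj b i j : off N b i = off N b j -> i = j.
Proof.
have bN := ltn_ord b; have iN := ltn_ord i; have jN := ltn_ord j.
rewrite !offE => h; apply: val_inj => /=.
by move: h; case: (leqP b i); case: (leqP b j); lia.
Qed.

Lemma off_eq0 i j : off N i j = 0 -> i = j.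
Proof. by move=> h; apply/esym/(@off_inj i); rewrite h offnn. Qed.

Lemma off_addC i j : i != j -> off N i j + off N j i = N.
Proof.
have iN := ltn_ord i; have jN := ltn_ord j.
move=> ne; have {}ne : nat_of_ord i != j by [].
by rewrite !offE; case: (leqP i j); case: (leqP j i); lia.
Qed.

Lemma off_pred x x' z :
  nat_of_ord x' = (x + N - 1) %% N -> off N x' z = (off N x z).+1 %% N.
Proof.
have xN := ltn_ord x; have x'N := ltn_ord x'; have zN := ltn_ord z.
have -> : (x + N - 1) %% N = if x == 0 :> nat then N - 1 else x - 1.
  case: eqP => [->|ne]; first by rewrite modn_small; lia.
  have -> : x + N - 1 = (x - 1) + N by lia.
  by rewrite modnDr modn_small; lia.
have modS v : v < N -> v.+1 %% N = if v.+1 == N then 0 else v.+1.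
  by move=> vN; case: eqP => [->|ne]; [rewrite modnn | rewrite modn_small //; lia].
move=> ex'; rewrite modS ?off_ltN // !offE ex'.
by case: eqP => h0; case: leqP => h1; case: leqP => h2; case: eqP => h3; lia.
Qed.

Lemma off_le_near k b x y : 2 * k < N -> off N b x <= k -> off N b y <= k ->
  (off N x y <= k) = (off N b x <= off N b y).
Proof. by move=> Nk hx hy; case: (off_rebase b x y) => -[h ->]; apply/idP/idP; lia. Qed.

End CircleOffsets.

(** * Arcs and maximal arcs *)

Definition nonadj N k (p q : vtx N) := (off N p.1 q.2 <= k) || (off N q.1 p.2 <= k).

Lemma adjGE N k (p q : vtx N) : adjG k p q = ~~ nonadj k p q.
Proof. by rewrite /adjG /nonadj negb_or -!ltnNge. Qed.

Lemma nonadjC N k (p q : vtx N) : nonadj k p q = nonadj k q p.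
Proof. by rewrite /nonadj orbC. Qed.

Definition subarc N (s m : vtx N) :=
  (off N m.1 s.1 <= off N m.1 s.2) && (off N m.1 s.2 <= off N m.1 m.2).

Section Subarcs.
Variable N : nat.
Implicit Types s q m : vtx N.

Lemma subarc_refl m : subarc m m.
Proof. by rewrite /subarc offnn leqnn. Qed.

Lemma subarc_trans s q m : subarc s q -> subarc q m -> subarc s m.
Proof.
rewrite /subarc => /andP[h1 h2] /andP[h3 h4]; apply/andP.
have := off_ltN m.1 m.2; rewrite (off_rebase_le h3) in h2.
by case: (off_rebase m.1 q.1 s.1) h1 h2 => -[? ->]; case: (off_rebase m.1 q.1 s.2) => -[? ->]; lia.
Qed.

Lemma subarc_len s m : subarc s m -> off N s.1 s.2 <= off N m.1 m.2.
Proof. by case/andP=> h1 h2; rewrite (off_rebase_le h1); lia. Qed.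

Lemma subarc_len_eq s m : subarc s m -> off N s.1 s.2 = off N m.1 m.2 -> s = m.
Proof.
case/andP=> h1 h2; rewrite (off_rebase_le h1) => e.
have /off_eq0 e1 : off N m.1 s.1 = 0 by lia.
have /off_inj e2 : off N m.1 s.2 = off N m.1 m.2 by lia.
by case: s e1 e2 {h1 h2 e} => s1 s2 /= <- ->; case: m.
Qed.

Lemma subarc_rebase (b : 'I_N) s m : subarc s m -> off N b m.1 + off N m.1 m.2 < N ->
  [/\ off N b m.1 <= off N b s.1, off N b s.1 <= off N b s.2 &
      off N b s.2 <= off N b m.1 + off N m.1 m.2].
Proof.
by case/andP=> h1 h2 h; rewrite (@offD _ b m.1 s.1) ?(@offD _ b m.1 s.2); try split; lia.
Qed.

End Subarcs.

Lemma nonadj_union N k (m m' s : vtx N) : 2 * k < N ->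
  off N m.1 m'.1 <= off N m.1 m.2 -> off N m.1 m.2 < off N m.1 m'.2 ->
  off N m.1 m'.2 <= k -> off N s.1 s.2 <= k ->
  nonadj k m s -> nonadj k m' s -> nonadj k (m.1, m'.2) s.
Proof.
case: m m' s => a b [c d] [x y]; rewrite /nonadj /= => Nk h1 h2 h3 hxy /orP hb /orP hc; apply/orP.
case: (leqP (off N a y) k) => hy; [by left | right].
case: hb => hb; first lia.
case: hc => hc //.
rewrite (off_rebase_le (b := a)) in hc; last lia.
have := off_ltN a y.
by case: (off_rebase a x b) hb => -[? ->] ?; case: (off_rebase a x y) hxy => -[? ->] ?;
   case: (off_rebase a x d) => -[? ->]; lia.
Qed.

Section MaximalIndependent.
Variables (N k : nat) (S : {set vtx N}).
Hypothesis Hmax : maximal_independent k S.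
Implicit Types p q r s m : vtx N.

Lemma S_short p : p \in S -> off N p.1 p.2 <= k.
Proof. by move=> pS; have := subsetP Hmax.1.1 p pS; rewrite inE. Qed.

Lemma S_nonadj p q : p \in S -> q \in S -> nonadj k p q.
Proof. by move=> pS qS; have := Hmax.1.2 p q pS qS; rewrite adjGE negbK. Qed.

Lemma mem_S_nonadj r : off N r.1 r.2 <= k -> (forall s, s \in S -> nonadj k r s) -> r \in S.
Proof.
move=> hr hs; suff <- : r |: S = S by rewrite setU11.
apply: Hmax.2 (subsetUr _ _) _; split.
  apply/subsetP => p; rewrite !inE => /predU1P[-> //|pS].
  by have := subsetP Hmax.1.1 p pS; rewrite inE.
move=> p q; rewrite !inE adjGE negbK => /predU1P[->|pS] /predU1P[->|qS].
- by rewrite /nonadj hr.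
- exact: hs.
- by rewrite nonadjC hs.
- exact: S_nonadj.
Qed.

Definition maxarcs := [set m in S | [forall s in S, subarc m s ==> (s == m)]].

Lemma maxarcs_S m : m \in maxarcs -> m \in S.
Proof. by rewrite inE => /andP[]. Qed.

Lemma maxarcs_max m s : m \in maxarcs -> s \in S -> subarc m s -> s = m.
Proof. by rewrite inE => /andP[_ /forall_inP H] sS /(implyP (H s sS)) /eqP. Qed.

Lemma exists_maxarc s : s \in S -> exists2 m, m \in maxarcs & subarc s m.
Proof.
move=> sS; have P0 : (s \in S) && subarc s s by rewrite sS subarc_refl.
case: (@arg_maxnP _ s [pred m | (m \in S) && subarc s m] (fun m => off N m.1 m.2) P0).
move=> m /andP[mS hsm] Hm; exists m => //.
rewrite inE mS; apply/forall_inP => s' s'S; apply/implyP => hms'.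
have /= := Hm s' (introT andP (conj s'S (subarc_trans hsm hms'))).
by move=> h; apply/eqP/esym/(subarc_len_eq hms'); have := subarc_len hms'; lia.
Qed.

Hypothesis Nk : 2 * k < N.

Lemma maxarcs_overlap_long m m' : m \in maxarcs -> m' \in S ->
  off N m.1 m'.1 <= off N m.1 m.2 -> off N m.1 m.2 < off N m.1 m'.2 ->
  k < off N m.1 m'.2.
Proof.
move=> mM m'S h1 h2; rewrite ltnNge; apply/negP => h3.
have mS := maxarcs_S mM.
have uS : (m.1, m'.2) \in S.
  apply: mem_S_nonadj => // s sS.
  exact: nonadj_union (S_short sS) (S_nonadj mS sS) (S_nonadj m'S sS).
have hmu : subarc m (m.1, m'.2) by rewrite /subarc /= offnn; lia.
by move: h2; have /(congr1 snd) /= -> := maxarcs_max mM uS hmu; rewrite ltnn.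
Qed.

End MaximalIndependent.

(** * A strict disjoint 3-cycle separates the maximal arcs *)

Definition ordered3 N (a : 'I_N) (p q r : vtx N) : Prop :=
  [/\ off N a p.2 < off N a q.1, off N a q.1 <= off N a q.2,
      off N a q.2 < off N a r.1 & off N a r.1 <= off N a r.2].

Lemma ordered3_rot N (a : 'I_N) (p q r : vtx N) : ordered3 p.1 p q r ->
  [\/ ordered3 a p q r, ordered3 a q r p | ordered3 a r p q].
Proof.
case: p q r => x0 y0 [x1 y1] [x2 y2]; rewrite /ordered3 /= => -[h1 h2 h3 h4].
have hN := off_ltN x0 y2; have hA := off_ltN x0 a.
have r1 (z : 'I_N) : off N x0 a <= off N x0 z -> off N a z = off N x0 z - off N x0 a.
  exact: off_rebase_le.
have r2 (z : 'I_N) : off N x0 z < off N x0 a -> off N a z = off N x0 z + N - off N x0 a.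
  exact: off_rebase_gt.
case: (posnP (off N x0 a)) => hA0.
  by apply: Or31; rewrite !r1 ?hA0 ?offnn; try split; lia.
have ex0 : off N a x0 = N - off N x0 a by rewrite r2 offnn.
rewrite ex0; case: (leqP (off N x0 a) (off N x0 y0)) => hA1.
  by apply: Or31; rewrite !r1 //; try split; lia.
rewrite (r2 y0) //; case: (leqP (off N x0 a) (off N x0 y1)) => hA2.
  by apply: Or32; rewrite !(r1 y1) ?(r1 x2) ?(r1 y2); try split; lia.
rewrite (r2 y1) // (r2 x1); last lia.
case: (leqP (off N x0 a) (off N x0 y2)) => hA3.
  by apply: Or33; rewrite !(r1 y2) //; try split; lia.
by apply: Or31; rewrite !(r2 x2) ?(r2 y2) //; try split; lia.
Qed.

Definition strict_triangle N k (p q r : vtx N) : Prop :=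
  [/\ off N p.1 q.2 <= k, off N q.1 r.2 <= k & off N r.1 p.2 <= k] /\
  [/\ k < off N p.1 r.2, k < off N q.1 p.2 & k < off N r.1 q.2].

Lemma strict_triangle_rot N k (p q r : vtx N) :
  strict_triangle k p q r -> strict_triangle k q r p.
Proof. by case=> -[? ? ?] [? ? ?]. Qed.

Lemma strict_alt_cycle3_triangle N k (c : nat -> vtx N) :
  strict_alt_cycle k 3 c -> strict_triangle k (c 0) (c 1) (c 2).
Proof.
case=> _ H.
have long i j : i < 3 -> j < 3 -> (k < off N (c i).1 (c j).2) = (j == (i + 2) %% 3).
  move=> hi hj; have := H i j hi hj.
  rewrite /xx /yy /cyc (modn_small hi) (modn_small hj) (_ : i + 3 - 1 = i + 2); last lia.
  by case=> h1 h2; apply/idP/eqP => [/h1|/h2].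
have short i j : i < 3 -> j < 3 -> (off N (c i).1 (c j).2 <= k) = (j != (i + 2) %% 3).
  by move=> hi hj; rewrite leqNgt long.
by split; split; rewrite ?short ?long.
Qed.

Lemma disjoint_property_ordered3 N (c : nat -> vtx N) :
  disjoint_property c -> ordered3 (c 0).1 (c 0) (c 1) (c 2).
Proof. by case/and5P => _ h1 h2 h3 /andP[h4 _]. Qed.

Lemma ordered3_long_overlapF N k (m m' p q r : vtx N) : 2 * k < N ->
  strict_triangle k p q r -> ordered3 m.1 p q r ->
  off N m.1 m'.1 <= off N m.1 m.2 -> off N m.1 m.2 < off N m.1 m'.2 ->
  off N m.1 m.2 <= k < off N m.1 m'.2 -> off N m'.1 m'.2 <= k ->
  nonadj k m r -> nonadj k m' r -> nonadj k m q -> nonadj k m' q -> False.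
Proof.
case: m m' p q r => a b [c d] [x1 y1] [x2 y2] [x3 y3].
rewrite /strict_triangle /ordered3 /nonadj /= => Nk [[_ s23 s31] [_ n21 n32]].
case=> h1 h2 h3 h4 o1 o2 /andP[o3 o4] o5.
have hN := off_ltN a y3; have hN2 := off_ltN a x3.
rewrite (off_rebase_le (b := a)) in o5; last lia.
rewrite (off_rebase_gt (b := a)) in s31; last lia.
rewrite (off_rebase_gt (b := a)) in n32; last lia.
rewrite (off_rebase_le (b := a)) in s23; last lia.
rewrite (off_rebase_gt (b := a)) in n21; last lia.
have X3b : off N a b < off N a x3 by lia.
rewrite (off_rebase_gt X3b) => /orP i3p.
have X3B : off N a b + N - k <= off N a x3 by lia.
clear i3p.
have X3d : off N a d < off N a x3 by lia.
rewrite (off_rebase_gt X3d) (off_rebase_le (b := a)); last lia.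
move=> /orP i3q.
have X3D : off N a d + N - k <= off N a x3 by lia.
clear i3q.
move=> /orP i2p.
have X2b : off N a b < off N a x2.
  case: (leqP (off N a x2) (off N a b)) => // h.
  rewrite (off_rebase_le h) in i2p; lia.
rewrite (off_rebase_gt X2b) in i2p.
have X2B : off N a b + N - k <= off N a x2 by lia.
clear i2p.
have X2d : off N a d < off N a x2 by lia.
rewrite (off_rebase_gt X2d) (off_rebase_le (b := a)); last lia.
move=> /orP i2q.
lia.
Qed.

Lemma strict_triangle_not_subarc N k (p q r m : vtx N) : 2 * k < N ->
  strict_triangle k p q r -> off N m.1 m.2 <= k ->
  subarc p m -> subarc q m -> subarc r m -> False.
Proof.
move=> Nk [[pq qr rp] [pr qp rq]] hm /andP[p1 p2] /andP[q1 q2] /andP[r1 r2].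
have near (x y : 'I_N) : off N m.1 x <= off N m.1 m.2 -> off N m.1 y <= off N m.1 m.2 ->
    (off N x y <= k) = (off N m.1 x <= off N m.1 y).
  by move=> hx hy; apply: off_le_near; lia.
by move: pq qr rp pr qp rq; rewrite ![_ < off N _ _]ltnNge !near; lia.
Qed.

Section StrictTriangleInS.
Variables (N k : nat) (S : {set vtx N}) (p q r : vtx N).
Hypothesis Nk : 2 * k < N.
Hypothesis Hmax : maximal_independent k S.
Hypothesis Htri : strict_triangle k p q r.
Hypothesis Hord : ordered3 p.1 p q r.
Hypotheses (pS : p \in S) (qS : q \in S) (rS : r \in S).
Implicit Types m : vtx N.

Lemma no_long_overlap m m' : m \in S -> m' \in S ->
  off N m.1 m'.1 <= off N m.1 m.2 -> off N m.1 m.2 < off N m.1 m'.2 ->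
  k < off N m.1 m'.2 -> False.
Proof.
move=> mS m'S h1 h2 h3.
have hmm' : off N m.1 m.2 <= k < off N m.1 m'.2 by rewrite (S_short Hmax mS).
have nd := S_nonadj Hmax mS; have nd' := S_nonadj Hmax m'S.
have overlap := fun p q r tri o =>
  @ordered3_long_overlapF N k m m' p q r Nk tri o h1 h2 hmm' (S_short Hmax m'S).
have tri' := strict_triangle_rot Htri; have tri'' := strict_triangle_rot tri'.
have [o|o|o] := ordered3_rot m.1 Hord.
- exact: overlap Htri o (nd _ rS) (nd' _ rS) (nd _ qS) (nd' _ qS).
- exact: overlap tri' o (nd _ pS) (nd' _ pS) (nd _ rS) (nd' _ rS).
- exact: overlap tri'' o (nd _ qS) (nd' _ qS) (nd _ pS) (nd' _ pS).
Qed.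

Lemma maxarcs_disjoint m m' : m \in maxarcs S -> m' \in maxarcs S -> m != m' ->
  off N m.1 m.2 < off N m.1 m'.1.
Proof.
move=> mM m'M ne; have mS := maxarcs_S mM; have m'S := maxarcs_S m'M.
have hm := S_short Hmax mS; have hm' := S_short Hmax m'S.
rewrite ltnNge; apply/negP => start_in.
case: (ltnP (off N m.1 m'.2) (off N m.1 m'.1)) => hwrap.
  by rewrite (off_rebase_gt hwrap) in hm'; have := off_ltN m.1 m'.1; lia.
case: (leqP (off N m.1 m'.2) (off N m.1 m.2)) => hend.
  by move: ne; rewrite (maxarcs_max m'M mS) ?eqxx // /subarc hwrap hend.
exact: no_long_overlap mS m'S start_in hend
  (maxarcs_overlap_long Hmax Nk mM m'S start_in hend).
Qed.

Lemma two_maxarcs : 1 < #|maxarcs S|.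
Proof.
rewrite ltnNge; apply/negP => /card_le1_eqP one.
have [m mM _] := exists_maxarc pS.
have sub s : s \in S -> subarc s m.
  by move=> sS; have [m' m'M] := exists_maxarc sS; rewrite (one _ _ mM m'M).
exact: strict_triangle_not_subarc Nk Htri (S_short Hmax (maxarcs_S mM))
  (sub p pS) (sub q qS) (sub r rS).
Qed.

End StrictTriangleInS.

(** * The maximal arcs in clockwise order *)

Lemma ltn_convex n : {in [pred j | j < n] &, forall a b c, a < c < b -> c \in [pred j | j < n]}.
Proof. by move=> a b; rewrite !inE => _ hb c /andP[_ hc]; rewrite inE; lia. Qed.

Section MaxarcEnumeration.
Variables (N k : nat) (S : {set vtx N}) (m0 : vtx N).
Hypothesis Nk : 2 * k < N.
Hypothesis Hmax : maximal_independent k S.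
Hypothesis m0M : m0 \in maxarcs S.
Hypothesis Hdisj : forall m m' : vtx N, m \in maxarcs S -> m' \in maxarcs S -> m != m' ->
  off N m.1 m.2 < off N m.1 m'.1.
Hypothesis Htwo : 1 < #|maxarcs S|.

Let pos (x : 'I_N) := off N m0.1 x.
Let arcs := sort (fun m m' : vtx N => pos m.1 <= pos m'.1) (enum (maxarcs S)).
Let L := size arcs.
Let arc i := nth m0 arcs i.
Let X i := pos (arc i).1.
Let Y i := pos (arc i).2.

Lemma L_gt1 : 1 < L.
Proof. by rewrite /L size_sort -cardE. Qed.

Lemma arc_maxarc i : i < L -> arc i \in maxarcs S.
Proof. by move=> h; have := mem_nth m0 h; rewrite mem_sort mem_enum. Qed.

Lemma arc_onto m : m \in maxarcs S -> exists2 i, i < L & arc i = m.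
Proof.
move=> mM; have msq : m \in arcs by rewrite mem_sort mem_enum.
by exists (index m arcs); [rewrite index_mem | rewrite /arc nth_index].
Qed.

Lemma arc_inj i j : i < L -> j < L -> arc i = arc j -> i = j.
Proof.
move=> hi hj e; apply/eqP.
by rewrite -(nth_uniq m0 hi hj) ?sort_uniq ?enum_uniq //; apply/eqP.
Qed.

Lemma X_le i j : i <= j -> j < L -> X i <= X j.
Proof.
move=> hij hj; have tr : transitive (fun m m' : vtx N => pos m.1 <= pos m'.1).
  by move=> ? ? ? /leq_trans; apply.
apply: (sorted_leq_nth tr) => //; rewrite ?inE ?(leq_ltn_trans hij) //.
exact: (sort_sorted (fun _ _ => leq_total _ _)).
Qed.

Lemma X_lt i j : i < j -> j < L -> X i < X j.
Proof.
move=> hij hj; have hi := ltn_trans hij hj.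
have ne : arc i != arc j by apply/eqP => /(arc_inj hi hj); lia.
have := X_le (ltnW hij) hj; rewrite leq_eqVlt => /predU1P[e|//].
by have := Hdisj (arc_maxarc hi) (arc_maxarc hj) ne; rewrite (off_inj e) offnn.
Qed.

Lemma X0 : X 0 = 0.
Proof.
have [j hj e] := arc_onto m0M.
by have := X_le (leq0n j) hj; rewrite /X /pos e offnn; lia.
Qed.

Lemma YE i : i < L -> Y i = X i + off N (arc i).1 (arc i).2.
Proof.
move=> hi; apply: offD; have hk := S_short Hmax (maxarcs_S (arc_maxarc hi)).
have [e|ne] := eqVneq (arc i).1 m0.1.
  by rewrite /X /pos e offnn add0n; exact: off_ltN.
have ne' : arc i != m0 by apply: contra_neq ne => ->.
by have := Hdisj (arc_maxarc hi) m0M ne'; have := off_addC ne; rewrite /X /pos; lia.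
Qed.

Lemma arc_bounds i : i < L -> X i <= Y i /\ Y i <= X i + k.
Proof. by move=> hi; rewrite YE //; have := S_short Hmax (maxarcs_S (arc_maxarc hi)); lia. Qed.

Lemma Y_lt_X i j : i < j -> j < L -> Y i < X j.
Proof.
move=> hij hj; have hi := ltn_trans hij hj.
have ne : arc i != arc j by apply/eqP => /(arc_inj hi hj); lia.
have := Hdisj (arc_maxarc hi) (arc_maxarc hj) ne.
have hX := X_le (ltnW hij) hj.
by move: (hX); rewrite (off_rebase_le (b := m0.1) hX) (YE hi) /X /pos; lia.
Qed.

Lemma subarc_pos s i : i < L -> subarc s (arc i) ->
  [/\ X i <= pos s.1, pos s.1 <= pos s.2 & pos s.2 <= Y i].
Proof.
by move=> hi hs; rewrite YE //; apply: subarc_rebase hs _; rewrite -YE //; exact: off_ltN.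
Qed.

Lemma off_subarcs_le i j s s' : i < L -> j < L -> i != j ->
  subarc s (arc i) -> subarc s' (arc j) -> off N s.1 s'.2 <= off N (arc i).1 (arc j).2.
Proof.
move=> hi hj ne hs hs'.
have [p1 p2 p3] := subarc_pos hi hs; have [q1 q2 q3] := subarc_pos hj hs'.
have [xy1 xy2] := arc_bounds hi; have [xy3 xy4] := arc_bounds hj.
case: (ltngtP i j) ne => // hij _.
- have := Y_lt_X hij hj; move: p1 p2 p3 q1 q2 q3 xy1 xy2 xy3 xy4.
  rewrite /Y /X /pos => *.
  rewrite (@off_rebase_le _ m0.1 s.1 s'.2) ?(@off_rebase_le _ m0.1 (arc i).1); lia.
- have := Y_lt_X hij hi; move: p1 p2 p3 q1 q2 q3 xy1 xy2 xy3 xy4.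
  rewrite /Y /X /pos => *.
  rewrite (@off_rebase_gt _ m0.1 s.1 s'.2) ?(@off_rebase_gt _ m0.1 (arc i).1); lia.
Qed.

Lemma nonadj_subarcs i j s s' : i < L -> j < L ->
  subarc s (arc i) -> subarc s' (arc j) -> nonadj k s s'.
Proof.
move=> hi hj hs hs'; have [e|ne] := eqVneq i j.
  subst j.
  have [p1 p2 p3] := subarc_pos hi hs; have [q1 q2 q3] := subarc_pos hi hs'.
  have [xy1 xy2] := arc_bounds hi; move: p1 p2 p3 q1 q2 q3 xy1 xy2; rewrite /Y /X /pos => *.
  apply/orP; case: (leqP (off N m0.1 s.1) (off N m0.1 s'.2)) => h.
    by left; rewrite (off_rebase_le h); lia.
  by right; rewrite (@off_rebase_le _ m0.1 s'.1 s.2); lia.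
have := S_nonadj Hmax (maxarcs_S (arc_maxarc hi)) (maxarcs_S (arc_maxarc hj)).
have := off_subarcs_le hi hj ne hs hs'.
have nji : j != i by rewrite eq_sym.
have := off_subarcs_le hj hi nji hs' hs.
by rewrite /nonadj; lia.
Qed.

Lemma arc_pred_extension_mem i (x' : 'I_N) :
  i < L -> nat_of_ord x' = ((arc i).1 + N - 1) %% N ->
  (forall j, j < L -> off N (arc i).1 (arc j).2 != k) -> (x', (arc i).2) \in S.
Proof.
move=> hi ex' notk.
have hk := S_short Hmax (maxarcs_S (arc_maxarc hi)).
have hlen : off N (arc i).1 (arc i).2 < k by have := notk i hi; lia.
apply: (mem_S_nonadj Hmax) => [|s sS].
  by rewrite /= (off_pred _ ex') modn_small //; lia.
have [m mM hsm] := exists_maxarc sS; have [j hj ejm] := arc_onto mM; rewrite -ejm in hsm.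
rewrite /nonadj /= (off_pred _ ex').
have := leq_mod (off N (arc i).1 s.2).+1 N.
have [eij|nij] := eqVneq i j.
  by subst j; case/andP: hsm; lia.
have := S_nonadj Hmax (maxarcs_S (arc_maxarc hi)) (maxarcs_S (arc_maxarc hj)).
have := off_subarcs_le hi hj nij (subarc_refl _) hsm.
have nji : j != i by rewrite eq_sym.
have := off_subarcs_le hj hi nji hsm (subarc_refl _).
by have := notk j hj; rewrite /nonadj; lia.
Qed.

(* Otherwise [arc i] could be extended backwards by one point inside [S]. *)
Lemma arc_tight i : i < L -> exists2 j, j < L & off N (arc i).1 (arc j).2 = k.
Proof.
move=> hi.
have [/existsP[j /eqP e]|/existsPn notk] :=
  boolP [exists j : 'I_L, off N (arc i).1 (arc j).2 == k]; first by exists j.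
have N0 : 0 < N by lia.
pose x' : 'I_N := Ordinal (ltn_pmod ((arc i).1 + N - 1) N0).
have ex' : nat_of_ord x' = ((arc i).1 + N - 1) %% N := erefl.
have rS := arc_pred_extension_mem hi ex' (fun j hj => notk (Ordinal hj)).
have hlen : off N (arc i).1 (arc i).2 < k.
  by have /= := notk (Ordinal hi); have := S_short Hmax (maxarcs_S (arc_maxarc hi)); lia.
have hsub : subarc (arc i) (x', (arc i).2).
  by rewrite /subarc /= !(off_pred _ ex') offnn !modn_small //; lia.
have := maxarcs_max (arc_maxarc hi) rS hsub => /(congr1 fst) /= ex.
by have := off_pred (arc i).1 ex'; rewrite offnn modn_small -?ex ?offnn //; lia.
Qed.

(* Arc positions unrolled over two turns of the circle: strictly increasing on [0, 2L). *)
Let Xl j := if j < L then X j else X (j - L) + N.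
Let Yl j := if j < L then Y j else Y (j - L) + N.

Lemma modn_unroll j : j < L + L -> j %% L = if j < L then j else j - L.
Proof.
move=> h; case: ifP => h1; first by rewrite modn_small.
have -> : j = (j - L) + L by lia.
by rewrite modnDr modn_small; lia.
Qed.

Lemma off_arc_Y i d : i < L -> d < L ->
  off N (arc i).1 (arc ((i + d) %% L)).2 = Yl (i + d) - X i.
Proof.
move=> hi hd; rewrite modn_unroll /Yl; last lia.
case: ifP => h.
  have := X_le (leq_addr d i) h; have := (arc_bounds h).1.
  by rewrite /X /Y /pos => *; apply: off_rebase_le; lia.
have h1 : i + d - L < i by lia.
by have := Y_lt_X h1 hi; rewrite /X /Y /pos => ?; apply: off_rebase_gt; lia.
Qed.

Lemma off_arc_X i d : i < L -> d < L ->
  off N (arc i).1 (arc ((i + d) %% L)).1 = Xl (i + d) - X i.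
Proof.
move=> hi hd; rewrite modn_unroll /Xl; last lia.
case: ifP => h.
  by have := X_le (leq_addr d i) h; rewrite /X /pos => ?; apply: off_rebase_le.
have h1 : i + d - L < i by lia.
have := Y_lt_X h1 hi; have := (arc_bounds (ltn_trans h1 hi)).1.
by rewrite /X /Y /pos => *; apply: off_rebase_gt; lia.
Qed.

Lemma Xl_le_Yl j : j < L + L -> Xl j <= Yl j.
Proof.
move=> h; rewrite /Xl /Yl; case: ifP => h1; first exact: (arc_bounds h1).1.
by rewrite leq_add2r; apply: (arc_bounds _).1; lia.
Qed.

Lemma Yl_lt_Xl j : j.+1 < L + L -> Yl j < Xl j.+1.
Proof.
move=> h; rewrite /Xl /Yl; case: (ltnP j.+1 L) => h1.
  by rewrite (ltnW h1); apply: Y_lt_X.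
case: (ltnP j L) => h2.
  have -> : j.+1 - L = 0 by lia.
  by rewrite X0; have := off_ltN m0.1 (arc j).2; rewrite /Y /pos; lia.
have -> : j.+1 - L = (j - L).+1 by lia.
by rewrite ltn_add2r; apply: Y_lt_X; lia.
Qed.

Lemma Yl_lt j j' : j < j' -> j' < L + L -> Yl j < Yl j'.
Proof.
move=> hjj' hj'.
have step : {in [pred j | j < L + L], forall i, i.+1 \in [pred j | j < L + L] -> Yl i < Yl i.+1}.
  by move=> i _; rewrite inE => hi; have := Yl_lt_Xl hi; have := Xl_le_Yl hi; lia.
by apply: (homo_ltn_in ltn_trans (@ltn_convex _) step); rewrite ?inE //; lia.
Qed.

Lemma Yl_le j j' : j <= j' -> j' < L + L -> Yl j <= Yl j'.
Proof. by rewrite leq_eqVlt => /predU1P[-> //|h] /(Yl_lt h)/ltnW. Qed.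

(* [arc (i + D i)] is the arc ending exactly [k] after the start of [arc i]. *)
Let D i := find (fun d => Yl (i + d) == X i + k) (iota 0 L).

Lemma D_spec i : i < L -> D i < L /\ Yl (i + D i) = X i + k.
Proof.
move=> hi; have [j hj e] := arc_tight hi.
have [d hd ej] : exists2 d, d < L & (i + d) %% L = j.
  case: (leqP i j) => hij; [exists (j - i) | exists (j + L - i)]; rewrite ?modn_unroll; try lia.
  - by rewrite ifT; lia.
  - by rewrite ifF; lia.
have hXY : X i <= Yl (i + d).
  have hid : i + d < L + L by lia.
  have := Yl_le (leq_addr d i) hid; rewrite {1}/Yl hi.
  by have := (arc_bounds hi).1; lia.
have hp : has (fun d => Yl (i + d) == X i + k) (iota 0 L).
  by apply/hasP; exists d; [rewrite mem_iota; lia | have := off_arc_Y hi hd; rewrite ej e; lia].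
have hf : D i < L by move: hp; rewrite has_find size_iota.
by split=> //; have /eqP := nth_find 0 hp; rewrite -/(D i) nth_iota // add0n.
Qed.

Lemma D_mono i : i.+1 < L -> D i <= D i.+1.
Proof.
move=> hi; have hi' : i < L by lia.
have [h1 e1] := D_spec hi'; have [h2 e2] := D_spec hi.
have := X_lt (ltnSn i) hi.
case: (leqP (i.+1 + D i.+1) (i + D i)) => h; last lia.
have hid : i + D i < L + L by lia.
by have := Yl_le h hid; lia.
Qed.

Lemma D_wrap : D L.-1 <= D 0.
Proof.
have hl : L.-1 < L by have := L_gt1; lia.
have [h1 e1] := D_spec hl; have [h2 e2] := D_spec (ltn_trans (ltnSn 0) L_gt1).
case: (leqP (D 0 + L) (L.-1 + D L.-1)) => h; last lia.
have hid : L.-1 + D L.-1 < L + L by lia.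
have := Yl_le h hid.
have : Yl (D 0 + L) = Y (D 0) + N by rewrite /Yl ifF ?addnK //; lia.
have : Yl (D 0) = Y (D 0) by rewrite /Yl h2.
have := (arc_bounds hl).1; have := X0; have := off_ltN m0.1 (arc L.-1).2.
by rewrite add0n in e2; rewrite /Y /X /pos in e1 e2 *; lia.
Qed.

Lemma D_const i : i < L -> D i = D 0.
Proof.
move=> hi; have hL : L.-1 < L by have := L_gt1; lia.
have step : {in [pred j | j < L], forall a, a.+1 \in [pred j | j < L] -> D a <= D a.+1}.
  by move=> a _; rewrite inE; exact: D_mono.
have mono := homo_leq_in (r := fun a b => a <= b) leqnn leq_trans (@ltn_convex _) step.
have := mono 0 i (ltn_trans (ltnSn 0) L_gt1) hi (leq0n i).
have hiL : i <= L.-1 by lia.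
by have := mono i L.-1 hi hL hiL; have := D_wrap; lia.
Qed.

Lemma Yl_leE j j' : j < L + L -> j' < L + L -> (Yl j <= Yl j') = (j <= j').
Proof.
move=> hj hj'; apply/idP/idP => [|h]; last exact: Yl_le h hj'.
by apply: contraTT; rewrite -!ltnNge => /Yl_lt; apply.
Qed.

(* Arcs [0] and [j] are non-adjacent in exactly one direction. *)
Lemma le_D0E j : 0 < j -> j < L -> (j <= D 0) = (j + D 0 < L).
Proof.
move=> hj0 hj; have hL := ltn_trans hj0 hj.
have [h0 e0] := D_spec hL; rewrite add0n X0 add0n in e0.
have [_ ej] := D_spec hj; rewrite (D_const hj) in ej.
have o1 := off_arc_Y hL hj; rewrite add0n modn_small // X0 subn0 in o1.
have hLj : L - j < L by lia.
have o2 := off_arc_Y hj hLj; rewrite subnKC ?modnn in o2; last lia.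
have eYj : Yl j = Y j by rewrite /Yl hj.
have eYL : Yl L = Y 0 + N by rewrite /Yl ltnn subnn.
have := S_nonadj Hmax (maxarcs_S (arc_maxarc hL)) (maxarcs_S (arc_maxarc hj)).
rewrite /nonadj o1 o2 -(Yl_leE (_ : j < L + L) (_ : D 0 < L + L)); try lia.
rewrite ltnNge -(Yl_leE (_ : L < L + L) (_ : j + D 0 < L + L)); try lia.
rewrite e0 ej eYj eYL; have := arc_bounds hj; have := (arc_bounds hL).1.
by case: leqP; case: leqP; lia.
Qed.

Lemma D0_gt0 : 0 < D 0.
Proof.
by rewrite lt0n; apply/eqP => D0; have := le_D0E (ltnSn 0) L_gt1; rewrite D0 addn0 L_gt1.
Qed.

Lemma L_odd : L = (2 * D 0).+1.
Proof.
have [hD _] := D_spec (ltn_trans (ltnSn 0) L_gt1).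
have := le_D0E D0_gt0 hD; rewrite leqnn => /esym h1.
case: (ltnP (D 0).+1 L) => h2; last lia.
by have := le_D0E (ltn0Sn _) h2; rewrite ltnn; lia.
Qed.

Lemma chain_subarc (a : 'I_L) (p : vtx N) :
  chain N (xx L arc a)
    [:: (false, nat_of_ord p.1); (false, nat_of_ord p.2); (false, nat_of_ord (yy L arc a))]
  = subarc p (arc a).
Proof. by rewrite /chain /= /xx /yy /cyc modn_small // offnn /subarc andbT. Qed.

Lemma arc_alt_cycle : alt_cycle k L arc.
Proof.
have hL := L_gt1; have hD := D0_gt0; have hLD := L_odd.
split; first lia; split; first exact: arc_inj; split.
  by move=> a ha; rewrite inE; apply/(S_short Hmax)/maxarcs_S/arc_maxarc.
move=> a ha; change (k < off N (xx L arc a) (yy L arc (a + L - 1))).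
rewrite /xx /yy /cyc (modn_small ha) (_ : a + L - 1 = a + (L - 1)); last lia.
rewrite off_arc_Y //; last lia.
have [_ es] := D_spec ha; rewrite (D_const ha) in es.
have h1 : a + D 0 < a + (L - 1) by lia.
have h2 : a + (L - 1) < L + L by lia.
by have := Yl_lt h1 h2; rewrite es; lia.
Qed.

Lemma arc_matching : matching_conditions k (D 0) arc.
Proof.
rewrite /matching_conditions -L_odd => a ha; have hL := L_gt1; split.
  rewrite /chain /= /xx /yy /cyc (modn_small ha) offnn /=.
  have ey : off N (arc a).1 (arc a).2 = Y a - X a by rewrite YE //; lia.
  have ex1 := off_arc_X ha hL; have ey1 := off_arc_Y ha hL.
  rewrite addn1 in ex1 ey1; rewrite ey ex1 ey1.
  have ha1 : a.+1 < L + L by lia.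
  have eYa : Yl a = Y a by rewrite /Yl ha.
  by have := Yl_lt_Xl ha1; have := Xl_le_Yl ha1; have := arc_bounds ha; lia.
rewrite /pair_size /xx /yy /cyc (modn_small ha).
have [hs es] := D_spec ha; rewrite (D_const ha) in es hs.
by rewrite off_arc_Y // es; lia.
Qed.

Lemma S_eq_Dset : S = Dset k L arc.
Proof.
have sub : S \subset Dset k L arc.
  apply/subsetP => p pS; rewrite inE; apply/andP; split.
    by rewrite inE; apply: (S_short Hmax).
  have [m mM hin] := exists_maxarc pS; have [j hj ejm] := arc_onto mM.
  by apply/existsP; exists (Ordinal hj); rewrite chain_subarc /= ejm.
have ind : independent k (Dset k L arc).
  split; first by apply/subsetP => p; rewrite inE => /andP[].
  move=> p q; rewrite !inE => /andP[_ /existsP[a ha]] /andP[_ /existsP[b hb]].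
  rewrite chain_subarc in ha; rewrite chain_subarc in hb.
  by rewrite adjGE negbK; exact: nonadj_subarcs (ltn_ord a) (ltn_ord b) ha hb.
exact/esym/(Hmax.2 _ sub ind).
Qed.

Lemma maxarcs_matching_cycle : exists (t : nat) (c0 : nat -> vtx N),
  1 <= t /\ alt_cycle k (2 * t).+1 c0 /\ matching_conditions k t c0 /\
  S = Dset k (2 * t).+1 c0.
Proof.
exists (D 0), arc; rewrite -L_odd.
exact: (conj D0_gt0 (conj arc_alt_cycle (conj arc_matching S_eq_Dset))).
Qed.

End MaxarcEnumeration.

Theorem theorem5p7 (n k : nat) (S : {set vtx (n + k)}) :
  3 <= n -> k < n -> n <= 2 * k ->
  maximal_independent k S ->
  ~ reversible k S ->
  (exists c : nat -> vtx (n + k),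
      strict_alt_cycle k 3 c /\ (forall a, a < 3 -> c a \in S) /\
      disjoint_property c) ->
  exists (t : nat) (c0 : nat -> vtx (n + k)),
    1 <= t /\ alt_cycle k (2 * t).+1 c0 /\ matching_conditions k t c0 /\
    S = Dset k (2 * t).+1 c0.
Proof.
(* Non-reversibility already follows from the strict 3-cycle in S. *)
move=> _ kn _ Hmax _ [c [Hc [HcS Hd]]].
have Nk : 2 * k < n + k by lia.
have Htri := strict_alt_cycle3_triangle Hc.
have Hord := disjoint_property_ordered3 Hd.
have [c0S c1S c2S] := And3 (HcS 0 isT) (HcS 1 isT) (HcS 2 isT).
have [m0 m0M _] := exists_maxarc c0S.
exact: maxarcs_matching_cycle Nk Hmax m0M
  (maxarcs_disjoint Nk Hmax Htri Hord c0S c1S c2S) (two_maxarcs Nk Hmax Htri c0S c1S c2S).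
Qed.
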